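(* Let $\Gamma$ be a typing environment and $\tau$ a refinement type all of whose refinements are local. Then $\Gamma\vdash\tau\preceq\lceil\tau\rceil$ and $\Gamma\vdash\lceil\tau\rceil\preceq\tau$ hold in the gradual refinement type system.
   Context: Refinement types $\tau ::= \{v{:}b\mid p\}\mid x{:}\tau\to\tau$ with $b\in\{\mathrm{Int},\mathrm{Bool}\}$. A predicate $p$ refining $v$ is local iff for every closing substitution $\theta$ there is a value $w$ with $\theta(p[w/v])$ evaluating to true. $\lceil\tau\rceil$ replaces every refinement by the unknown refinement: $\lceil\{v{:}b\mid p\}\rceil=\{v{:}b\mid ?\}$, $\lceil x{:}\tau_x\to\tau\rceil = x{:}\lceil\tau_x\rceil\to\lceil\tau\rceil$. Gradual predicates are $p$ or $p\land ?$ ($p$ local; $?$ means $\mathrm{true}\land ?$). Specificity: $p_1\preceq p_2$ iff for all closing $\theta$, $\theta(p_1)$ true implies $\theta(p_2)$ true. Concretization: $\gamma(p)=\{p\}$, $\gamma(p\land ?)=\{p'\mid p'\preceq p,\ p'$ local$\}$, extended pointwise to types and environments. Gradual subtyping: for functions, $\Gamma\vdash x{:}\tau_{x1}\to\tau_1\preceq x{:}\tau_{x2}\to\tau_2$ if $\Gamma\vdash\tau_{x2}\preceq\tau_{x1}$ and $\Gamma,x{:}\tau_{x2}\vdash\tau_1\preceq\tau_2$; for base types, $\tilde\Gamma\vdash\{v{:}b\mid\tilde p_1\}\preceq\{v{:}b\mid\tilde p_2\}$ holds iff there exist $\Gamma'\in\gamma(\tilde\Gamma)$, $p_i\in\gamma(\tilde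 p_i)$ such that for every substitution $\theta$ of the variables of $\Gamma',v{:}b$ by values of their types, $\theta(p_1)$ true implies $\theta(p_2)$ true. *)

(* Shallow embedding of the refinement logic of
   "Gradual Refinement Types": predicates are boolean-valued functions of
   a valuation (closing substitution) of the variables. *)
From Stdlib Require Import ZArith List.
Import ListNotations.

Inductive base : Type := TInt | TBool.

Inductive value : Type := VInt (z : Z) | VBool (b : bool).

Definition has_base (w : value) (b : base) : Prop :=
  match w, b with
  | VInt _, TInt => True
  | VBool _, TBool => True
  | _, _ => False
  end.

(** Program variables are named by naturals; [V] is the distinguished
    refinement variable v. *)
Definition ident := nat.
Inductive var : Type := V | X (x : ident).

Definition var_eqb (a c : var) : bool :=
  match a, c with
  | V, V => true
  | X x, X y => Nat.eqb x y
  | _, _ => false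
  end.

Definition valuation := var -> value.

Definition upd (th : valuation) (a : var) (w : value) : valuation :=
  fun c => if var_eqb c a then w else th c.

Definition pred := valuation -> bool.

Definition ptrue : pred := fun _ => true.

Definition local (b : base) (p : pred) : Prop :=
  forall th : valuation, exists w : value, has_base w b /\ p (upd th V w) = true.

Definition spec (p1 p2 : pred) : Prop :=
  forall th : valuation, p1 th = true -> p2 th = true.

Inductive ty : Type :=
| TBase (b : base) (p : pred)
| TFun (x : ident) (tx t : ty).

Inductive gpred : Type :=
| GExact (p : pred)
| GImprecise (p : pred).   (* p /\ ? *)

Inductive gty : Type :=
| GBase (b : base) (gp : gpred)
| GFun (x : ident) (tx t : gty).

(** The unknown refinement ? = true /\ ? *)
Definition gunknown : gpred := GImprecise ptrue.

Fixpoint lift (t : ty) : gty :=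
  match t with
  | TBase b p => GBase b (GExact p)
  | TFun x tx t => GFun x (lift tx) (lift t)
  end.

Fixpoint ceil (t : ty) : gty :=
  match t with
  | TBase b _ => GBase b gunknown
  | TFun x tx t => GFun x (ceil tx) (ceil t)
  end.

Fixpoint all_local (t : ty) : Prop :=
  match t with
  | TBase b p => local b p
  | TFun _ tx t => all_local tx /\ all_local t
  end.

Definition gamma_pred (b : base) (gp : gpred) (p' : pred) : Prop :=
  match gp with
  | GExact p => p' = p
  | GImprecise p => spec p' p /\ local b p'
  end.

Fixpoint gamma_ty (g : gty) (t : ty) : Prop :=
  match g, t with
  | GBase b gp, TBase b' p => b' = b /\ gamma_pred b gp p
  | GFun x gx g1, TFun x' tx t1 => x' = x /\ gamma_ty gx tx /\ gamma_ty g1 t1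
  | _, _ => False
  end.

(** Environments: lists of bindings, most recent binding first. *)
Definition env := list (ident * ty).
Definition genv := list (ident * gty).

Definition gamma_env (G : genv) (E : env) : Prop :=
  Forall2 (fun gb eb => fst eb = fst gb /\ gamma_ty (snd gb) (snd eb)) G E.

Definition wf_gpred (b : base) (gp : gpred) : Prop :=
  match gp with
  | GExact _ => True
  | GImprecise p => local b p
  end.

Fixpoint wf_gty (g : gty) : Prop :=
  match g with
  | GBase b gp => wf_gpred b gp
  | GFun _ gx g1 => wf_gty gx /\ wf_gty g1
  end.

Definition wf_genv (G : genv) : Prop := Forall (fun gb => wf_gty (snd gb)) G.

Definition env_sat (E : env) (th : valuation) : Prop :=
  Forall (fun eb =>
            match snd eb with
            | TBase b q => has_base (th (X (fst eb))) b /\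
                           q (upd th V (th (X (fst eb)))) = true
            | TFun _ _ _ => True
            end) E.

Definition entails (E : env) (b : base) (p1 p2 : pred) : Prop :=
  forall th : valuation, has_base (th V) b -> env_sat E th ->
    p1 th = true -> p2 th = true.

Inductive gsub : genv -> gty -> gty -> Prop :=
| GSubBase : forall G b gp1 gp2,
    (exists E p1 p2, gamma_env G E /\ gamma_pred b gp1 p1 /\
                     gamma_pred b gp2 p2 /\ entails E b p1 p2) ->
    gsub G (GBase b gp1) (GBase b gp2)
| GSubFun : forall G x tx1 t1 tx2 t2,
    gsub G tx2 tx1 ->
    gsub ((x, tx2) :: G) t1 t2 ->
    gsub G (GFun x tx1 t1) (GFun x tx2 t2).

(* At a base type {v:b | p}, both p and ? have p itself in their
   concretization (p ⪯ true, and p is local), so the subtyping judgement reduces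
   to the trivial entailment p ⇒ p under any concretization of Γ; one exists
   because every gradual predicate of a well-formed environment concretizes to
   its own bound. Function types follow by induction, the argument and result
   judgements being instances of the same two statements in Γ extended by the
   well-formed type ⌈τx⌉ or τx. *)
From Stdlib Require Import ZArith List.

Lemma local_ptrue (b : base) : local b ptrue.
Proof.
  intros th; destruct b.
  - exists (VInt 0%Z); split; reflexivity.
  - exists (VBool true); split; reflexivity.
Qed.

Lemma gamma_pred_exact (b : base) (p : pred) : gamma_pred b (GExact p) p.
Proof. reflexivity. Qed.

Lemma gamma_pred_unknown (b : base) (p : pred) :
  local b p -> gamma_pred b gunknown p.
Proof. intros Hp; split; [intros th _; reflexivity | exact Hp]. Qed.

Fixpoint gty_bound (g : gty) : ty :=
  match g with
  | GBase b (GExact p) | GBase b (GImprecise p) => TBase b p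
  | GFun x gx g1 => TFun x (gty_bound gx) (gty_bound g1)
  end.

Lemma gamma_ty_bound (g : gty) : wf_gty g -> gamma_ty g (gty_bound g).
Proof.
  induction g as [b [p | p] | x gx IHx g1 IH1]; simpl.
  - intros _; split; reflexivity.
  - intros Hp; split; [reflexivity | split; [intros th H; exact H | exact Hp]].
  - intros [Hx H1]; auto.
Qed.

Lemma gamma_env_exists (G : genv) : wf_genv G -> exists E, gamma_env G E.
Proof.
  induction 1 as [| [x g] G Hg _ [E HE]].
  - exists nil; constructor.
  - exists ((x, gty_bound g) :: E); constructor; auto.
    split; [reflexivity | apply gamma_ty_bound; exact Hg].
Qed.

Lemma gsub_base_common (G : genv) (b : base) (gp1 gp2 : gpred) (p : pred) :
  wf_genv G -> gamma_pred b gp1 p -> gamma_pred b gp2 p ->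
  gsub G (GBase b gp1) (GBase b gp2).
Proof.
  intros HG H1 H2; destruct (gamma_env_exists G HG) as [E HE].
  constructor; exists E, p, p; repeat split; auto.
  intros th _ _ H; exact H.
Qed.

Lemma wf_gty_lift (t : ty) : wf_gty (lift t).
Proof. induction t; simpl; auto. Qed.

Lemma wf_gty_ceil (t : ty) : wf_gty (ceil t).
Proof. induction t; simpl; auto using local_ptrue. Qed.

Theorem mainTheorem6 (G : genv) (t : ty) :
  wf_genv G -> all_local t ->
  gsub G (lift t) (ceil t) /\ gsub G (ceil t) (lift t).
Proof.
  revert G; induction t as [b p | x tx IHx t1 IH1]; intros G HG Ht; simpl in *.
  - split; apply gsub_base_common with p;
      auto using gamma_pred_exact, gamma_pred_unknown.
  - destruct Ht as [Hx H1].
    destruct (IHx G HG Hx) as [Hlift_ceil Hceil_lift].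
    assert (Hwf_ceil : wf_genv ((x, ceil tx) :: G))
      by (constructor; [apply wf_gty_ceil | exact HG]).
    assert (Hwf_lift : wf_genv ((x, lift tx) :: G))
      by (constructor; [apply wf_gty_lift | exact HG]).
    split; constructor.
    + exact Hceil_lift.
    + exact (proj1 (IH1 _ Hwf_ceil H1)).
    + exact Hlift_ceil.
    + exact (proj2 (IH1 _ Hwf_lift H1)).
Qed.
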